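(* Let $N\ge 5$ be odd. Let $G_{N,2}$ be the graph with vertex set $\mathbb Z_N$ in which two distinct vertices $x,y$ are adjacent iff $y-x\not\equiv\pm2\pmod N$, and $G_{N,1}$ the graph with vertex set $\mathbb Z_N$ in which distinct $x,y$ are adjacent iff $y-x\not\equiv\pm1\pmod N$. Put $\Delta=\sqrt{N(N-4)}$, $\rho=\frac{N-2+\Delta}{2}$. For $u,v\in\mathbb Z_N$ let $q\equiv v-u\pmod N$, let $s\equiv 2^{-1}\pmod N$, and define $\delta_2(q)=\min\{sq\bmod N,\;N-(sq\bmod N)\}$. Then the effective resistance $R^{(2)}(u,v)$ between $u$ and $v$ in $G_{N,2}$ equals the effective resistance in $G_{N,1}$ between two vertices at circulant distance $\delta_2(q)$ (e.g. $0$ and $\delta_2(q)$), and explicitly \[ R^{(2)}(u,v)=\frac{2}{\Delta(\rho^N+1)}\left\{\rho^N-1+(-1)^{\delta_2(q)}\left(\rho^{\delta_2(q)}-\rho^{N-\delta_2(q)}\right)\right\}. \]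
   Context: Effective resistance is computed with unit conductance on every edge. *)

From HB Require Import structures.
From mathcomp Require Import all_boot all_order all_algebra.
From Stdlib Require Import ClassicalEpsilon.
Set Implicit Arguments. Unset Strict Implicit. Unset Printing Implicit Defensive.
Import Order.TTheory GRing.Theory Num.Theory.
Local Open Scope ring_scope.

Definition zdiff (N : nat) (x y : 'I_N) : nat := ((y + N - x) %% N)%N.

Definition Gadj (N k : nat) : rel 'I_N :=
  fun x y => [&& x != y, zdiff x y != (k %% N)%N & zdiff x y != ((N - k) %% N)%N].

Definition laplacian (R : nzRingType) (n : nat) (adj : rel 'I_n) : 'M[R]_n :=
  \matrix_(i, j) (if i == j then (#|[set k | adj i k]|)%:R
                  else - ((adj i j : nat)%:R)).

(* phi is a potential for unit current injected at u and extracted at v. *)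
Definition unit_potential (R : nzRingType) (n : nat) (adj : rel 'I_n)
  (u v : 'I_n) (phi : 'cV[R]_n) : Prop :=
  laplacian R adj *m phi = delta_mx u 0 - delta_mx v 0.

(* Effective resistance = potential difference phi(u) - phi(v) for a unit
   current flow from u to v (well defined on a connected graph). *)
Definition eff_res (R : nzRingType) (n : nat) (adj : rel 'I_n) (u v : 'I_n) : R :=
  let phi := epsilon (inhabits (0 : 'cV[R]_n)) (unit_potential adj u v) in
  phi u 0 - phi v 0.

(* delta_2(q) = min(sq mod N, N - (sq mod N)), s = 2^{-1} mod N = (N+1)/2 for N odd. *)
Definition inv2 (N : nat) : nat := (N.+1)./2.
Definition delta2 (N q : nat) : nat :=
  minn ((inv2 N * q) %% N) (N - (inv2 N * q) %% N).

Definition resDelta (R : rcfType) (N : nat) : R := Num.sqrt ((N * (N - 4))%N%:R).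
Definition resRho (R : rcfType) (N : nat) : R := ((N%:R - 2 + resDelta R N) / 2).

Definition res_formula (R : rcfType) (N d : nat) : R :=
  2 / (resDelta R N * (resRho R N ^+ N + 1)) *
  (resRho R N ^+ N - 1 + (-1) ^+ d * (resRho R N ^+ d - resRho R N ^+ (N - d))).

Arguments Gadj : clear implicits.
Arguments eff_res : clear implicits.

(* Fix a step c of Z_N with inverse s, and let Gamma be the graph in which x is
   adjacent to every vertex except x and x +- c.  Its Laplacian acts by
   (L w)(x) = (N-2) w(x) + w(x+c) + w(x-c) - sum w.  If y is a root of
   y^2 + (N-2) y + 1 = 0, the sequence h(j) = y^j + y^(N-j) satisfies
   h(m) + (N-2) h(m+1) + h(m+2) = 0 and h(N-j) = h(j), so a multiple G(z) of
   h(z) solves (N-2) G(z) + G(z+1) + G(z-1) = [z = 0] on Z_N.  Multiplication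
   by s turns the steps +-c into +-1, hence G(s(i-a)) - G(s(i-b)) is a
   potential for a unit current from a to b; harmonic functions are
   constant by the maximum principle (Gamma has diameter 2), so the effective
   resistance is 2 (G(0) - G(s(b-a))).  For N odd, y = -rho gives the closed formula, which
   is symmetric under j |-> N - j; with c = 2, s = (N+1)/2 and c = 1, s = 1
   both resistances are the formula evaluated at delta_2(q). *)

From HB Require Import structures.
From mathcomp Require Import all_boot all_order all_algebra.
From mathcomp Require Import ring lra zify.
From Stdlib Require Import ClassicalEpsilon.
Set Implicit Arguments. Unset Strict Implicit. Unset Printing Implicit Defensive.
Import Order.TTheory GRing.Theory Num.Theory.
Local Open Scope ring_scope.

Lemma laplacian_mulmx (R : nzRingType) n (adj : rel 'I_n) (w : 'cV[R]_n) x :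
  ~~ adj x x -> (laplacian R adj *m w) x 0 = \sum_y (adj x y)%:R * (w x 0 - w y 0).
Proof.
move=> adj_xx.
have degE : (#|[set k | adj x k]|)%:R = \sum_y (adj x y)%:R :> R.
  rewrite cardsE -sum1_card natr_sum big_mkcond.
  by apply: eq_bigr => y _; rewrite unfold_in; case: (adj x y).
rewrite mxE (bigD1 x) //= [RHS](bigD1 x) //= (negbTE adj_xx) mul0r add0r.
rewrite mxE eqxx degE (bigD1 x) //= (negbTE adj_xx) add0r mulr_suml.
under [RHS]eq_bigr do rewrite mulrBr.
rewrite sumrB -sumrN; congr (_ + _).
by apply: eq_bigr => y /negbTE yx; rewrite mxE eq_sym yx mulNr.
Qed.

Lemma laplacian_harmonic_max (R : realDomainType) n (adj : rel 'I_n) (w : 'cV[R]_n) x y :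
  ~~ adj x x -> (laplacian R adj *m w) x 0 = 0 -> (forall z, w z 0 <= w x 0) ->
  adj x y -> w y 0 = w x 0.
Proof.
move=> adj_xx; rewrite laplacian_mulmx // => harm wmax adj_xy.
have /psumr_eq0P/(_ harm y isT) : forall z, true -> 0 <= (adj x z)%:R * (w x 0 - w z 0).
  by move=> z _; rewrite mulr_ge0 ?ler0n ?subr_ge0.
by rewrite adj_xy mul1r => /eqP; rewrite subr_eq0 => /eqP.
Qed.

Lemma eff_resE (R : nzRingType) n (adj : rel 'I_n) (a b : 'I_n) (phi : 'cV[R]_n) :
  (forall w : 'cV[R]_n, laplacian R adj *m w = 0 -> forall x y, w x 0 = w y 0) ->
  unit_potential adj a b phi -> eff_res R n adj a b = phi a 0 - phi b 0.
Proof.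
move=> harmonic_const phiP; rewrite /eff_res.
set psi := epsilon _ _.
have psiP : unit_potential adj a b psi by apply: epsilon_spec; exists phi.
have /harmonic_const/(_ a b) : laplacian R adj *m (psi - phi) = 0.
  by rewrite mulmxBr psiP phiP subrr.
rewrite !mxE => /eqP; rewrite subr_eq => /eqP ->.
by rewrite addrAC (addrAC (psi b 0)) subrr add0r addrC.
Qed.

Lemma exists_notin (T : finType) (s : seq T) : (size s < #|T|)%N -> exists x, x \notin s.
Proof.
move=> small_s; apply/existsP; apply: contraTT small_s => /existsPn all_in.
rewrite -leqNgt (leq_trans _ (card_size s)) // subset_leq_card //.
by apply/subsetP=> x _; apply/negPn/all_in.
Qed.

Lemma zdiffE n (x y : 'I_n.+2) : zdiff x y = val (y - x).
Proof. by rewrite /zdiff /= modnDmr addnBA // ltnW. Qed.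

Lemma val_Zp_natS n k : val (k%:R : 'I_n.+2) = (k %% n.+2)%N.
Proof. exact: (@val_Zp_nat n.+2 isT). Qed.

Lemma natr_double_neq0 n k : odd n.+2 -> (0 < k < n.+2)%N -> (k%:R + k%:R : 'I_n.+2) != 0.
Proof.
move=> N_odd /andP[k_gt0 k_lt]; rewrite -natrD addnn -mul2n.
apply: contraTneq k_lt => /(congr1 val); rewrite val_Zp_natS => /eqP.
rewrite -/(dvdn _ _) Gauss_dvdr ?coprimen2 // => /(dvdn_leq k_gt0).
by rewrite leqNgt => /negbTE->.
Qed.

Lemma GadjE n k (x y : 'I_n.+2) : (0 < k < n.+2)%N ->
  Gadj n.+2 k x y = [&& y != x, y != x + k%:R & y != x - k%:R].
Proof.
case/andP=> k_gt0 k_lt; rewrite /Gadj zdiffE (eq_sym x y) (modn_small k_lt).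
have val_k : val (k%:R : 'I_n.+2) = k by rewrite val_Zp_natS modn_small.
have val_Nk : val (- k%:R : 'I_n.+2) = ((n.+2 - k) %% n.+2)%N by rewrite /= val_k.
rewrite -[in val (y - x) != k]val_k -val_Nk !(inj_eq val_inj).
by rewrite !subr_eq (addrC k%:R) (addrC (- k%:R)).
Qed.

Section Green.

Variables (R : fieldType) (n : nat) (y : R).

Definition sympow (j : nat) : R := y ^+ j + y ^+ (n.+2 - j).

Definition green_norm : R := n%:R * sympow 0 + sympow 1 + sympow n.+1.

Definition green (z : 'I_n.+2) : R := sympow z / green_norm.

Lemma sympowC j : (j <= n.+2)%N -> sympow (n.+2 - j) = sympow j.
Proof. by move=> j_le; rewrite /sympow subKn // addrC. Qed.

Lemma greenN z : green (- z) = green z.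
Proof.
rewrite /green (_ : val (- z) = (n.+2 - z) %% n.+2)%N //.
have [->|z_gt0] := posnP z; first by rewrite subn0 modnn.
by rewrite modn_small ?sympowC ?ltn_subrL ?z_gt0 // ltnW.
Qed.

Hypothesis y_root : y ^+ 2 + n%:R * y + 1 = 0.

Lemma sympow_rec m : (m.+2 <= n.+2)%N ->
  sympow m + n%:R * sympow m.+1 + sympow m.+2 = 0.
Proof.
move=> m_le; rewrite /sympow.
have -> : (n.+2 - m = (n.+2 - m.+2).+2)%N by lia.
have -> : (n.+2 - m.+1 = (n.+2 - m.+2).+1)%N by lia.
set p := (n.+2 - m.+2)%N; rewrite !exprS.
have -> : y ^+ m + y * (y * y ^+ p) + n%:R * (y * y ^+ m + y * y ^+ p) + (y * (y * y ^+ m) + y ^+ p)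
   = (y ^+ m + y ^+ p) * (y ^+ 2 + n%:R * y + 1) by ring.
by rewrite y_root mulr0.
Qed.

Lemma green_norm_mul : green_norm * y = (y ^+ 2 - 1) * (1 - y ^+ n.+2).
Proof.
rewrite /green_norm /sympow !subn0 subSS subn0 subSn // subnn expr0 expr1 exprS.
apply/eqP; rewrite -subr_eq0; apply/eqP.
transitivity ((1 + y * y ^+ n.+1) * (y ^+ 2 + n%:R * y + 1)); first by ring.
by rewrite y_root mulr0.
Qed.

Hypothesis green_norm_neq0 : green_norm != 0.

Lemma green_rec z : n%:R * green z + green (z + 1) + green (z - 1) = (z == 0)%:R.
Proof.
rewrite /green mulrA -!mulrDl; apply: (canLR (mulfK green_norm_neq0)).
have val_Nz : val (- 1 : 'I_n.+2) = n.+1 by rewrite /= modn_small.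
have [->|z_neq0] := eqVneq z 0.
  by rewrite mul1r add0r sub0r val_Nz.
have [m zE] : exists m, val z = m.+1.
  by case: z z_neq0 => [[|m] ?] //; exists m.
have z_lt := ltn_ord z; rewrite zE in z_lt.
have -> : val (z - 1) = m.
  rewrite /= (modn_small (_ : 1 < n.+2)%N) // subn1 (modn_small (_ : n.+1 < n.+2)%N) //.
  by rewrite zE addSnnS modnDr modn_small // ltnW.
have -> : sympow (z + 1)%R = sympow m.+2.
  rewrite /= (modn_small (_ : 1 < n.+2)%N) // zE addn1.
  have [->|m_lt] := eqVneq m.+2 n.+2; first by rewrite modnn -(subnn n.+2) sympowC.
  by rewrite modn_small // ltn_neqAle m_lt.
by rewrite zE mul0r addrC addrA sympow_rec.
Qed.

End Green.

Lemma sumr_affine (Z : finNzRingType) (V : nmodType) (s c a : Z) (F : Z -> V) :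
  s * c = 1 -> \sum_i F (s * (i - a)) = \sum_i F i.
Proof.
move=> s_c; have affK z : s * (c * z + a - a) = z by rewrite addrK mulrA s_c mul1r.
rewrite (reindex_inj (h := fun z => c * z + a)); first by apply: eq_bigr => z _; rewrite affK.
by move=> z1 z2 /(congr1 (fun t => s * (t - a))); rewrite !affK.
Qed.

Section Circulant.

Variables (R : realFieldType) (n : nat) (c : 'I_n.+2) (adj : rel 'I_n.+2).
Hypothesis adjE : forall x y, adj x y = [&& y != x, y != x + c & y != x - c].
Hypothesis c2_neq0 : c + c != 0.

Lemma circ_adj_irr x : ~~ adj x x.
Proof. by rewrite adjE eqxx. Qed.

Lemma circ_adj_sym x y : adj x y = adj y x.
Proof.
by rewrite !adjE (eq_sym x y) -subr_eq (eq_sym (y - c)) (eq_sym y (x - c)) subr_eq (andbC (x != y - c)).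
Qed.

Lemma circ_shifts_neq x : [/\ x + c != x, x - c != x & x + c != x - c].
Proof.
have c_neq0 : c != 0 by apply: contraNneq c2_neq0 => ->; rewrite addr0.
have shift a b : (x + a == x + b) = (a == b) by rewrite (inj_eq (addrI x)).
by rewrite -{2 4}[x]addr0 !shift oppr_eq0 eq_sym -addr_eq0 eq_sym.
Qed.

Lemma circ_sum_adj (f : 'I_n.+2 -> R) x :
  \sum_y (adj x y)%:R * f y = \sum_y f y - f x - f (x + c) - f (x - c).
Proof.
have pick a : \sum_y (y == a)%:R * f y = f a.
  by rewrite (bigD1 a) //= eqxx mul1r big1 ?addr0 // => y /negbTE ->; rewrite mul0r.
rewrite -(pick x) -(pick (x + c)) -(pick (x - c)) -!sumrB.
apply: eq_bigr => y _; rewrite adjE.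
have [xc xNc xcNc] := circ_shifts_neq x.
have [->|y_x] := eqVneq y x.
  by rewrite !(eq_sym x) (negbTE xc) (negbTE xNc) /= !mul0r !subr0 mul1r subrr.
have [->|y_xc] := eqVneq y (x + c).
  by rewrite (negbTE xcNc) /= !mul0r !subr0 mul1r subrr.
have [->|y_xNc] := eqVneq y (x - c); first by rewrite /= !mul0r !subr0 mul1r subrr.
by rewrite /= !mul0r !subr0 mul1r.
Qed.

Lemma circ_laplacian_mulmx (w : 'cV[R]_n.+2) x :
  (laplacian R adj *m w) x 0 = n%:R * w x 0 + w (x + c) 0 + w (x - c) 0 - \sum_y w y 0.
Proof.
rewrite laplacian_mulmx ?circ_adj_irr //.
under eq_bigr do rewrite mulrBr.
rewrite sumrB (circ_sum_adj (fun=> w x 0)) (circ_sum_adj (fun y => w y 0)) sumr_const.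
by rewrite card_ord !mulrSr -mulr_natl; ring.
Qed.

Hypothesis N_ge5 : (5 <= n.+2)%N.

Lemma circ_common_neighbour x : exists2 j, adj x j & adj j (x + c).
Proof.
have [j] : exists j, j \notin [:: x; x + c; x - c; x + c + c].
  by apply: exists_notin; rewrite card_ord.
rewrite !inE !negb_or => /and4P [jx jxc jxNc jx2c].
exists j; first by rewrite adjE jx jxc jxNc.
by rewrite adjE !(eq_sym (x + c)) jxc (inj_eq (addIr c)) jx subr_eq jx2c.
Qed.

Lemma circ_laplacian_ker (w : 'cV[R]_n.+2) :
  laplacian R adj *m w = 0 -> forall a b, w a 0 = w b 0.
Proof.
move=> harm.
have [i _ imax] := @arg_maxP _ R _ ord0 xpredT (fun j => w j 0) isT.
have maxP j z : w j 0 = w i 0 -> adj j z -> w z 0 = w i 0.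
  move=> wj; rewrite -wj; apply: laplacian_harmonic_max (circ_adj_irr j) _ _.
    by rewrite harm mxE.
  by move=> k; rewrite wj; apply: imax.
suff wE z : w z 0 = w i 0 by move=> a b; rewrite !wE.
have [->|z_neq] := eqVneq z i; first by [].
have [/maxP->//|] := boolP (adj i z).
rewrite adjE z_neq /= negb_and !negbK => /orP [/eqP zE | /eqP zE].
  have [j ij jz] := circ_common_neighbour i.
  by rewrite zE; apply: (maxP j) => //; apply: maxP ij.
have [j zj] := circ_common_neighbour z; rewrite zE subrK => ji.
by apply: (maxP j); [apply: maxP; rewrite // circ_adj_sym | rewrite circ_adj_sym -zE].
Qed.

Variables (s : 'I_n.+2) (y : R).
Hypothesis s_c : s * c = 1.
Hypothesis y_root : y ^+ 2 + n%:R * y + 1 = 0.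
Hypothesis green_norm_neq0 : green_norm n y != 0.

Definition green_potential (a b : 'I_n.+2) : 'cV[R]_n.+2 :=
  \col_i (green y (s * (i - a)) - green y (s * (i - b))).

Lemma green_potentialP a b : unit_potential adj a b (green_potential a b).
Proof.
apply/matrixP => i j; rewrite ord1 circ_laplacian_mulmx.
have -> : \sum_k green_potential a b k 0 = 0.
  by under eq_bigr do rewrite mxE; rewrite sumrB !(sumr_affine _ _ s_c) subrr.
have shift t e : s * (i + e - t) = s * (i - t) + s * e by ring.
rewrite !mxE !shift mulrN s_c.
set A := s * (i - a); set B := s * (i - b).
transitivity ((n%:R * green y A + green y (A + 1) + green y (A - 1))
  - (n%:R * green y B + green y (B + 1) + green y (B - 1))); first by ring.
have s_lreg : GRing.lreg s by apply/mulrI/unitrPr; exists c.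
by rewrite !green_rec // /A /B !(mulrI_eq0 _ s_lreg) !subr_eq0 !andbT.
Qed.

Lemma eff_res_circulant a b :
  eff_res R n.+2 adj a b = 2 * (green y (0 : 'I_n.+2) - green y (s * (b - a))).
Proof.
rewrite (eff_resE circ_laplacian_ker (green_potentialP a b)) !mxE !subrr mulr0.
have -> : s * (a - b) = - (s * (b - a)) by ring.
by rewrite greenN; ring.
Qed.

End Circulant.

Lemma signr_subn_odd (R : nzRingType) N j : odd N -> (j <= N)%N ->
  (-1) ^+ (N - j) = - (-1) ^+ j :> R.
Proof.
move=> N_odd j_le; rewrite -signr_odd oddB // N_odd -[in RHS]signr_odd.
by case: (odd j); rewrite ?expr0 ?expr1 ?opprK.
Qed.

Lemma sympow_opp (R : fieldType) n (x : R) j : odd n.+2 -> (j <= n.+2)%N ->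
  sympow n (- x) j = (-1) ^+ j * (x ^+ j - x ^+ (n.+2 - j)).
Proof.
by move=> N_odd j_le; rewrite /sympow !(exprNn x) signr_subn_odd // mulNr mulrBr addrC.
Qed.

Lemma res_formulaC (R : rcfType) N j : odd N -> (j <= N)%N ->
  res_formula R N (N - j) = res_formula R N j.
Proof.
move=> N_odd j_le; rewrite /res_formula subKn // signr_subn_odd //; congr (_ * (_ + _)).
by rewrite mulNr -mulrN opprB.
Qed.

Lemma res_formula_min (R : rcfType) N j : odd N -> (j <= N)%N ->
  res_formula R N (minn j (N - j)) = res_formula R N j.
Proof.
by move=> N_odd j_le; case: (leqP j (N - j)) => _; rewrite ?res_formulaC.
Qed.

Section ResRho.

Variables (R : rcfType) (n : nat).
Hypothesis N_ge5 : (5 <= n.+2)%N.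
Local Notation D := (resDelta R n.+2).
Local Notation r := (resRho R n.+2).

Lemma resDelta_gt0 : 0 < D.
Proof. by rewrite sqrtr_gt0 ltr0n muln_gt0; apply/andP; split; lia. Qed.

Lemma resRhoE : r = (n%:R + D) / 2.
Proof. by rewrite /resRho -addn2 natrD addrK. Qed.

Lemma resRho_root : r ^+ 2 - n%:R * r + 1 = 0.
Proof.
have D_sqr : D ^+ 2 = n%:R ^+ 2 - 4.
  rewrite sqr_sqrtr ?ler0n // natrM natrB; last by lia.
  by rewrite -addn2 natrD; ring.
rewrite resRhoE; transitivity ((D ^+ 2 - (n%:R ^+ 2 - 4)) / 4); first by field.
by rewrite D_sqr subrr mul0r.
Qed.

Lemma resRho_gt1 : 1 < r.
Proof.
have n_ge3 : 3 <= n%:R :> R by rewrite (ler_nat R 3 n); lia.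
by rewrite resRhoE; have := resDelta_gt0; lra.
Qed.

Lemma resRho_sqr_sub1 : r ^+ 2 - 1 = r * D.
Proof.
have D_r : D = 2 * r - n%:R by rewrite resRhoE; field.
rewrite D_r; transitivity (r * (2 * r - n%:R) - (r ^+ 2 - n%:R * r + 1)); first by ring.
by rewrite resRho_root subr0.
Qed.

Lemma opp_resRho_root : (- r) ^+ 2 + n%:R * (- r) + 1 = 0.
Proof. by rewrite sqrrN mulrN resRho_root. Qed.

Hypothesis N_odd : odd n.+2.

Lemma green_norm_opp_resRho : green_norm n (- r) = - (D * (1 + r ^+ n.+2)).
Proof.
have r_neq0 : - r != 0 by rewrite oppr_eq0 gt_eqF // (lt_trans ltr01 resRho_gt1).
apply: (mulIf r_neq0); rewrite green_norm_mul; last exact: opp_resRho_root.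
have := resRho_sqr_sub1; rewrite sqrrN (exprNn r) -signr_odd N_odd expr1.
by move: (resRho R n.+2) (resDelta R n.+2) => x d ->; ring.
Qed.

Lemma res_formula_green (z : 'I_n.+2) :
  2 * (green (- r) (0 : 'I_n.+2) - green (- r) z) = res_formula R n.+2 z.
Proof.
rewrite /green -mulrBl green_norm_opp_resRho.
rewrite (sympow_opp _ N_odd (ltnW (ltn_ord z))) (sympow_opp _ N_odd (leq0n _)).
rewrite /res_formula subn0 !expr0 mul1r.
move: (resRho R n.+2) (resDelta R n.+2) => x d.
by rewrite (addrC (x ^+ n.+2)) invrN; move: (_^-1) => i; ring.
Qed.

End ResRho.

Lemma eff_res_Gadj (R : rcfType) n k (s a b : 'I_n.+2) :
  odd n.+2 -> (5 <= n.+2)%N -> (0 < k < n.+2)%N -> s * k%:R = 1 ->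
  eff_res R n.+2 (Gadj n.+2 k) a b = res_formula R n.+2 (val (s * (b - a))).
Proof.
move=> N_odd N_ge5 k_range s_k.
have norm_neq0 : green_norm n (- resRho R n.+2) != 0.
  have r_gt0 : 0 < resRho R n.+2 by have := resRho_gt1 R N_ge5; lra.
  rewrite green_norm_opp_resRho // oppr_eq0 mulf_neq0 ?lt0r_neq0 ?resDelta_gt0 //.
  by rewrite addr_gt0 ?exprn_gt0.
rewrite (eff_res_circulant (fun x y => GadjE x y k_range) (natr_double_neq0 N_odd k_range)
  N_ge5 s_k (opp_resRho_root R N_ge5) norm_neq0).
exact: res_formula_green.
Qed.

Unset Implicit Arguments.

Theorem theorem4p3 (R : rcfType) (N : nat) (hodd : odd N) (hN : (5 <= N)%N)
  (u v : 'I_N) :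
  let q := zdiff u v in
  let d := delta2 N q in
  (forall x y : 'I_N, val x = 0%N -> val y = d ->
     eff_res R N (Gadj N 2) u v = eff_res R N (Gadj N 1) x y) /\
  eff_res R N (Gadj N 2) u v = res_formula R N d.
Proof.
case: N hodd hN u v => [|[|n]] // N_odd N_ge5 u v q d.
have inv2_2 : ((inv2 n.+2)%:R : 'I_n.+2) * 2%:R = 1.
  apply: val_inj; rewrite -natrM muln2 val_Zp_natS /inv2.
  have := odd_double_half n.+3; rewrite oddS N_odd add0n => ->.
  by rewrite -(addn1 n.+2) modnDl /= modn_small.
have val_mulE (x y : 'I_n.+2) : val (x * y) = (x * y %% n.+2)%N by [].
have res2 : eff_res R n.+2 (Gadj n.+2 2) u v = res_formula R n.+2 d.
  rewrite (eff_res_Gadj _ _ _ N_odd N_ge5 _ inv2_2); last by lia.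
  rewrite /d /delta2 /q zdiffE res_formula_min // ?val_mulE ?val_Zp_natS ?modnMml //.
  by rewrite ltnW // ltn_pmod.
split=> [x y x0 yd|//]; have -> : x = 0 by apply: val_inj.
by rewrite res2 (@eff_res_Gadj R n 1 1 0 y N_odd N_ge5 isT (mulr1 1)) subr0 mul1r yd.
Qed.
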